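(* (Local triangle inequality.) Fix an integer $N\ge1$. Let $\Gamma=(V,E)$ be a finite graph and $\phi:V\to\mathbb{C}$ a solution of equation (1) with $\gamma:V\to\mathbb{R}$. Let $x,y,z\in V$ be pairwise adjacent with $\gamma(x),\gamma(y),\gamma(z)<1$. Then $\ell(\overline{xy})+\ell(\overline{xz})\ge\ell(\overline{yz})$, and the inequality is strict if $\phi$ is not constant on $\{x\}\cup\{w:w\sim x\}$.
   Context: Equation (1) at $x$ of degree $n(x)$: $\frac{\gamma(x)}{n(x)}\big(\sum_{w\sim x}(\phi(w)-\phi(x))\big)^2=\sum_{w\sim x}(\phi(x)-\phi(w))^2$. For $x\in V$ put $\rho(x)=\frac12\Big\{\sum_{w\sim x}|\phi(w)-\phi(x)|^2-\frac{\gamma(x)}{n(x)}\Big|\sum_{w\sim x}(\phi(w)-\phi(x))\Big|^2\Big\}$. If $\gamma(x)<1$, the median edge length at $x$ (relative to $\phi$, in dimension $N$) is $r(x)\ge0$ with $r(x)^2=\frac{N+(1-N)\gamma(x)}{n(x)(1-\gamma(x))}\rho(x)$. For an edge $\overline{xy}$ with $\gamma(x),\gamma(y)<1$, its length is $\ell(\overline{xy})=\frac{r(x)+r(y)}{2}$. *)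

(* The complex numbers are modelled by an arbitrary
   numClosedFieldType C (e.g. algC); real values are elements x with
   x \is Num.real, and |z| is the norm `|z|. *)
From HB Require Import structures.
From mathcomp Require Import all_boot all_order all_algebra all_field.
Set Implicit Arguments. Unset Strict Implicit. Unset Printing Implicit Defensive.
Import Order.TTheory GRing.Theory Num.Theory.
Local Open Scope ring_scope.

Section Defs.
Variables (C : numClosedFieldType) (V : finType) (adj : rel V).

Definition simple_graph : Prop :=
  symmetric adj /\ irreflexive adj.

Definition deg (x : V) : nat := #|[set w | adj x w]|.

Definition eq1_at (phi : V -> C) (gamma : V -> C) (x : V) : Prop :=
  gamma x / (deg x)%:R * (\sum_(w | adj x w) (phi w - phi x)) ^+ 2
  = \sum_(w | adj x w) (phi x - phi w) ^+ 2.

Definition rho (phi : V -> C) (gamma : V -> C) (x : V) : C :=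
  2^-1 * (\sum_(w | adj x w) `|phi w - phi x| ^+ 2
          - gamma x / (deg x)%:R * `|\sum_(w | adj x w) (phi w - phi x)| ^+ 2).

Definition median_len (N : nat) (phi : V -> C) (gamma : V -> C) (x : V) : C :=
  sqrtC ((N%:R + (1 - N%:R) * gamma x) / ((deg x)%:R * (1 - gamma x))
         * rho phi gamma x).

Definition edge_len (N : nat) (phi : V -> C) (gamma : V -> C) (x y : V) : C :=
  (median_len N phi gamma x + median_len N phi gamma y) / 2.

End Defs.

(* The edge length is the mean of the median lengths at the two endpoints,
   so for a triangle x, y, z the identity
       l(xy) + l(xz) = l(yz) + r(x)
   holds, and the theorem reduces to r(x) >= 0, with r(x) > 0 as soon as
   phi is not constant on the closed neighbourhood of x.  Since r(x) is the
   square root of a positive dimension factor times rho(x), everything rests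
   on the sign of rho(x) = (T - gamma(x)/n * U) / 2, where
   T = sum |phi w - phi x|^2, U = |sum (phi w - phi x)|^2 and n = n(x).
   The Cauchy-Schwarz inequality gives U <= n T, and an elementary estimate
   for gamma < 1 then shows that T - gamma/n * U is nonnegative, and
   positive when T > 0. *)
From HB Require Import structures.
From mathcomp Require Import all_boot all_order all_algebra all_field.
From mathcomp Require Import ring.
Set Implicit Arguments. Unset Strict Implicit. Unset Printing Implicit Defensive.
Import Order.TTheory GRing.Theory Num.Theory.
Local Open Scope ring_scope.

(* Cauchy-Schwarz against the constant vector: (sum b)^2 <= #|A| sum b^2.
   It follows from expanding the nonnegative sum of (b i - mean)^2. *)
Lemma sqr_sum_le_card_sum_sqr (R : numFieldType) (I : finType) (A : pred I)
    (b : I -> R) :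
  (forall i, b i \is Num.real) ->
  (\sum_(i in A) b i) ^+ 2 <= #|A|%:R * \sum_(i in A) b i ^+ 2.
Proof.
move=> b_real.
have [A0|A_gt0] := eqVneq #|A| 0%N.
  rewrite A0 mul0r big_pred0 ?expr0n // => i.
  by apply/negbTE/negP => iA; move: (card0_eq A0 i); rewrite iA.
set s := \sum_(i in A) b i; set q := \sum_(i in A) b i ^+ 2.
set m := s / #|A|%:R.
have m_real : m \is Num.real by rewrite rpredM ?rpredV ?realn ?rpred_sum.
have var_ge0 : 0 <= \sum_(i in A) (b i - m) ^+ 2.
  by apply: sumr_ge0 => i _; rewrite -realEsqr rpredB.
have var_expand :
    \sum_(i in A) (b i - m) ^+ 2 = q - (m *+ 2) * s + m ^+ 2 *+ #|A|.
  rewrite -sumr_const /q /s mulr_sumr -sumrB -big_split /=.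
  by apply: eq_bigr => i _; ring.
have card_neq0 : (#|A|%:R : R) != 0 by rewrite pnatr_eq0.
rewrite -subr_ge0.
have -> : #|A|%:R * q - s ^+ 2 = #|A|%:R * (q - (m *+ 2) * s + m ^+ 2 *+ #|A|).
  by rewrite /m -mulr_natr; field.
by rewrite -var_expand mulr_ge0 ?ler0n.
Qed.

(* The form used for rho, via the triangle inequality: |sum f|^2 <= #|A| sum |f|^2. *)
Lemma norm_sum_sqr_le (R : numFieldType) (I : finType) (A : pred I)
    (f : I -> R) :
  `|\sum_(i in A) f i| ^+ 2 <= #|A|%:R * \sum_(i in A) `|f i| ^+ 2.
Proof.
have cs := sqr_sum_le_card_sum_sqr A (fun i => normr_real (f i)).
apply: le_trans cs.
by rewrite lerXn2r ?nnegrE ?sumr_ge0 ?ler_norm_sum.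
Qed.

(* If 0 <= U <= n T and gamma < 1, then T - gamma/n * U >= 0, strictly
   when T > 0: for gamma >= 0 compare with (1 - gamma) T, for gamma < 0 the
   subtracted term is nonpositive. *)
Lemma sub_scaled_le_ge0 (R : numFieldType) (n T U g : R) :
  0 < n -> 0 <= U -> U <= n * T -> g \is Num.real -> g < 1 ->
  0 <= T - g / n * U /\ (0 < T -> 0 < T - g / n * U).
Proof.
move=> n_gt0 U_ge0 UT g_real g_lt1.
have UnT : U / n <= T by rewrite ler_pdivrMr // mulrC.
have Un_ge0 : 0 <= U / n by rewrite divr_ge0 // ltW.
have -> : g / n * U = g * (U / n) by rewrite mulrAC mulrA.
have [g_ge0|g_lt0] := real_leP (real0 R) g_real.
  have le_T : (1 - g) * T <= T - g * (U / n).
    by rewrite mulrBl mul1r lerB // ler_wpM2l.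
  have g1_gt0 : 0 < 1 - g by rewrite subr_gt0.
  have T_ge0 : 0 <= T := le_trans Un_ge0 UnT.
  split; first by apply: le_trans _ le_T; rewrite mulr_ge0 // ltW.
  by move=> T_gt0; apply: lt_le_trans _ le_T; rewrite mulr_gt0.
have le_T : T <= T - g * (U / n) by rewrite -{1}(subr0 T) lerB // nmulr_rle0.
split; first exact: le_trans (le_trans Un_ge0 UnT) le_T.
by move=> T_gt0; apply: lt_le_trans _ le_T.
Qed.

(* The dimension factor (N + (1 - N) g) / (n (1 - g)) is positive for N >= 1,
   n > 0 and g < 1, since its numerator is 1 + (N - 1)(1 - g). *)
Lemma dim_factor_gt0 (R : numFieldType) (N : nat) (n g : R) :
  (1 <= N)%N -> 0 < n -> g < 1 ->
  0 < (N%:R + (1 - N%:R) * g) / (n * (1 - g)).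
Proof.
case: N => // N _ n_gt0 g_lt1.
have -> : N.+1%:R + (1 - N.+1%:R) * g = 1 + N%:R * (1 - g).
  by rewrite -natr1; ring.
by rewrite divr_gt0 ?mulr_gt0 ?subr_gt0 // ltr_wpDr // mulr_ge0 // subr_ge0 ltW.
Qed.

Section MedianLength.
Variables (C : numClosedFieldType) (V : finType) (adj : rel V).
Variables (phi gamma : V -> C) (x : V).
Hypotheses (gamma_real : gamma x \is Num.real) (gamma_lt1 : gamma x < 1).

Lemma deg_gt0 (y : V) : adj x y -> 0 < (deg adj x)%:R :> C.
Proof.
move=> axy; rewrite ltr0n /deg lt0n; apply/eqP => /eqP.
by rewrite cards_eq0 => /eqP e; move: (in_set0 y); rewrite -e inE axy.
Qed.

Lemma rho_sign : 0 < (deg adj x)%:R :> C ->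
  0 <= rho adj phi gamma x
  /\ ((exists w, adj x w /\ phi w <> phi x) -> 0 < rho adj phi gamma x).
Proof.
move=> n_gt0; rewrite /rho.
set T := \sum_(w | adj x w) `|phi w - phi x| ^+ 2.
have UT : `|\sum_(w | adj x w) (phi w - phi x)| ^+ 2 <= (deg adj x)%:R * T.
  by rewrite /deg cardsE; apply: norm_sum_sqr_le.
have [core_ge0 core_gt0] :=
  sub_scaled_le_ge0 n_gt0 (exprn_ge0 2 (normr_ge0 _)) UT gamma_real gamma_lt1.
split; first by rewrite mulr_ge0 ?invr_ge0 ?ler0n.
case=> w [aw phi_w]; rewrite mulr_gt0 ?invr_gt0 ?ltr0n // core_gt0 //.
rewrite /T (bigD1 w) //= ltr_pwDl ?sumr_ge0 // => [|v _].
  by rewrite exprn_gt0 // normr_gt0 subr_eq0; apply/eqP.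
exact: exprn_ge0.
Qed.

Lemma median_len_sign (N : nat) (y : V) : (1 <= N)%N -> adj x y ->
  0 <= median_len adj N phi gamma x
  /\ ((exists w, adj x w /\ phi w <> phi x) -> 0 < median_len adj N phi gamma x).
Proof.
move=> N_ge1 axy; rewrite /median_len sqrtC_ge0 sqrtC_gt0.
have n_gt0 := deg_gt0 axy.
have factor_gt0 := dim_factor_gt0 N_ge1 n_gt0 gamma_lt1.
have [rho_ge0 rho_gt0] := rho_sign n_gt0.
split; first by rewrite mulr_ge0 // ltW.
by move=> nonconst; rewrite mulr_gt0 // rho_gt0.
Qed.

End MedianLength.

Lemma edge_len_triangle (C : numClosedFieldType) (V : finType) (adj : rel V)
    (N : nat) (phi gamma : V -> C) (x y z : V) :
  edge_len adj N phi gamma x y + edge_len adj N phi gamma x z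
  = edge_len adj N phi gamma y z + median_len adj N phi gamma x.
Proof. by rewrite /edge_len; field. Qed.

Theorem proposition6p4 (C : numClosedFieldType) (N : nat) (V : finType)
    (adj : rel V) (phi : V -> C) (gamma : V -> C) (x y z : V) :
  (1 <= N)%N ->
  simple_graph adj ->
  (forall v, gamma v \is Num.real) ->
  (forall v, eq1_at adj phi gamma v) ->
  adj x y -> adj x z -> adj y z ->
  gamma x < 1 -> gamma y < 1 -> gamma z < 1 ->
  edge_len adj N phi gamma y z <= edge_len adj N phi gamma x y + edge_len adj N phi gamma x z
  /\ ((exists w, adj x w /\ phi w <> phi x) ->
      edge_len adj N phi gamma y z < edge_len adj N phi gamma x y + edge_len adj N phi gamma x z).
Proof.
move=> N_ge1 _ gamma_real _ axy _ _ gamma_x _ _.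
have [r_ge0 r_gt0] := median_len_sign phi (gamma_real x) gamma_x N_ge1 axy.
rewrite edge_len_triangle lerDl ltrDl.
by split=> // nonconst; apply: r_gt0.
Qed.
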